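(* Let $A$ be a synaptic algebra, $p,q\in P$, $r:=[p,q]:=(p\vee q)\wedge(p\vee q^{\perp})\wedge(p^{\perp}\vee q)\wedge(p^{\perp}\vee q^{\perp})$, $c:=(pqp+p^{\perp}q^{\perp}p^{\perp})^{1/2}$ and $s:=(pq^{\perp}p+p^{\perp}qp^{\perp})^{1/2}$. Then: (i) $c^{\circ}Cp$, $c^{\circ}Cq$, $c^{\circ}Cs$, $c^{\circ}Cr$, $s^{\circ}Cp$, $s^{\circ}Cq$, $s^{\circ}Cr$, $s^{\circ}Cc$, and $c^{\circ}Cs^{\circ}$; (ii) $c^{\circ}=(p\vee q^{\perp})\wedge(p^{\perp}\vee q)$ and $s^{\circ}=(p\vee q)\wedge(p^{\perp}\vee q^{\perp})$; (iii) $(cs)^{\circ}=c^{\circ}s^{\circ}=c^{\circ}\wedge s^{\circ}=(p\vee q)\wedge(p\vee q^{\perp})\wedge(p^{\perp}\vee q)\wedge(p^{\perp}\vee q^{\perp})=r=[p,q]$; (iv) $c^2(s^{\circ})^{\perp}=(s^{\circ})^{\perp}c^2=(s^{\circ})^{\perp}$, whence $(s^{\circ})^{\perp}\le c^2\le c$; (v) $s^2(c^{\circ})^{\perp}=(c^{\circ})^{\perp}s^2=(c^{\circ})^{\perp}$, whence $(c^{\circ})^{\perp}\le s^2\le s$.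
   Context: Synaptic algebra (Foulis): $R$ is a real linear associative algebra with unit $1$, and $A\subseteq R$ is a real linear subspace with $1\in A$. For $a,b\in A$ write $aCb$ iff $ab=ba$; $C(a):=\{b\in A: aCb\}$; $CC(a):=\{b\in A: bCd \text{ for all } d\in C(a)\}$. $A$ is a synaptic algebra with enveloping algebra $R$ iff: (SA1) $A$ is a partially ordered archimedean real linear space with positive cone $A^+$, $1$ is an order unit, $\|\cdot\|$ the order-unit norm; (SA2) $a\in A\Rightarrow a^2\in A^+$; (SA3) $a,b\in A^+\Rightarrow aba\in A^+$; (SA4) if $a\in A$, $b\in A^+$, $aba=0$ then $ab=ba=0$; (SA5) if $a\in A^+$ there is $b\in A^+\cap CC(a)$ with $b^2=a$; (SA6) for $a\in A$ there is $p=p^2\in A$ with $ab=0\Leftrightarrow pb=0$ for all $b\in A$; (SA7) if $1\le a$ there is $b\in A$ with $ab=ba=1$; (SA8) if $a,b\in A$, $a_1\le a_2\le\cdots$ are pairwise commuting elements of $C(b)$ with $\|a-a_n\|\to0$, then $a\in C(b)$. $A$ is nondegenerate. $P:=\{p\in A:p=p^2\}$ with the inherited order is an orthomodular lattice with $p^{\perp}:=1-p$, meet $\wedge$, join $\vee$. For $0\le a$, $a^{1/2}$ is its unique positive square root in $A$. The carrier $a^{\circ}$ of $a\in A$ is the unique projection such that for all $b\in A$, $ab=0\Leftrightarrow a^{\circ}b=0$. (Here $c$ and $s$ commute, so $cs\in A$.) *)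

(* Enveloping algebra: Rg : algType F (real linear associative unital algebra;
   mathcomp's algType is a non-trivial ring, so 1 <> 0, i.e. nondegeneracy). *)
From HB Require Import structures.
From mathcomp Require Import all_boot all_order all_algebra.
From mathcomp Require Import reals.
From Stdlib Require Import ClassicalEpsilon.
Set Implicit Arguments.
Unset Strict Implicit.
Unset Printing Implicit Defensive.
Import GRing.Theory Num.Theory.
Local Open Scope ring_scope.

Section Synaptic.
Variables (F : realType) (Rg : algType F).
Variables (A pos : Rg -> Prop).

Definition sle (a b : Rg) : Prop := pos (b - a).

Definition cmt (a b : Rg) : Prop := a * b = b * a.

Definition CCset (a : Rg) (b : Rg) : Prop :=
  A b /\ forall d, A d -> cmt a d -> cmt b d.

Definition is_proj (p : Rg) : Prop := A p /\ p * p = p.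

Definition porth (p : Rg) : Rg := 1 - p.

(* ||x|| <= e in the order-unit norm, i.e. -e1 <= x <= e1 *)
Definition onorm_le (x : Rg) (e : F) : Prop :=
  sle (- (e *: 1)) x /\ sle x (e *: 1).

Record synaptic : Prop := {
  sub_0 : A 0;
  sub_D : forall a b, A a -> A b -> A (a + b);
  sub_Z : forall (k : F) a, A a -> A (k *: a);
  sub_1 : A 1;
  pos_sub : forall a, pos a -> A a;
  pos_0 : pos 0;
  pos_D : forall a b, pos a -> pos b -> pos (a + b);
  pos_Z : forall (k : F) a, 0 <= k -> pos a -> pos (k *: a);
  pos_antisym : forall a, pos a -> pos (- a) -> a = 0;
  archimedean : forall a b, A a -> A b ->
      (forall n : nat, sle (a *+ n) b) -> sle a 0;
  order_unit : forall a, A a -> exists n : nat,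
      sle (- (1 *+ n)) a /\ sle a (1 *+ n);
  sa2 : forall a, A a -> pos (a * a);
  sa3 : forall a b, pos a -> pos b -> pos (a * b * a);
  sa4 : forall a b, A a -> pos b -> a * b * a = 0 -> a * b = 0 /\ b * a = 0;
  sa5 : forall a, pos a -> exists b, pos b /\ CCset a b /\ b * b = a;
  sa6 : forall a, A a -> exists p, is_proj p /\
      (forall b, A b -> (a * b = 0 <-> p * b = 0));
  sa7 : forall a, sle 1 a -> exists b, A b /\ a * b = 1 /\ b * a = 1;
  sa8 : forall (a b : Rg) (an : nat -> Rg), A a -> A b ->
      (forall n, A (an n)) ->
      (forall n, sle (an n) (an n.+1)) ->
      (forall m n, cmt (an m) (an n)) ->
      (forall n, cmt (an n) b) ->
      (forall e : F, 0 < e -> exists N : nat, forall n, (N <= n)%N ->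
          onorm_le (a - an n) e) ->
      cmt a b
}.

Definition carrier (a : Rg) : Rg :=
  epsilon (inhabits 0) (fun p => is_proj p /\
    forall b, A b -> (a * b = 0 <-> p * b = 0)).

Definition psqrt (a : Rg) : Rg :=
  epsilon (inhabits 0) (fun b => pos b /\ b * b = a).

Definition pmeet (p q : Rg) : Rg :=
  epsilon (inhabits 0) (fun m => is_proj m /\ sle m p /\ sle m q /\
    forall x, is_proj x -> sle x p -> sle x q -> sle x m).

Definition pjoin (p q : Rg) : Rg :=
  epsilon (inhabits 0) (fun j => is_proj j /\ sle p j /\ sle q j /\
    forall x, is_proj x -> sle p x -> sle q x -> sle j x).

Definition pcomm (p q : Rg) : Rg :=
  pmeet (pmeet (pmeet (pjoin p q) (pjoin p (porth q)))
               (pjoin (porth p) q))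
        (pjoin (porth p) (porth q)).

End Synaptic.

From HB Require Import structures.
From mathcomp Require Import all_boot all_order all_algebra.
From mathcomp Require Import reals.
From Stdlib Require Import ClassicalEpsilon.
Import GRing.Theory Num.Theory.
Local Open Scope ring_scope.
Set Implicit Arguments.
Unset Strict Implicit.

(* c^2 = pqp + p'q'p' and s^2 = pq'p + p'qp' = (p - q)^2 are positive, commute
   with p and q, and add up to 1.  Since a and a^2 have the same carrier, c^o is
   the carrier of c^2.  Joins of projections are carriers of sums, e v f = (e + f)^o,
   and p v q' commutes with p' v q because their complements lie under q and q'.
   For h = 1 - (c^2)^o the identity h c^2 h = (hp) q (hp) + (hp') q' (hp') = 0
   forces hpq = 0 = hp'q', which puts h under the complement of (p v q')(p' v q);
   so c^o = (p v q') ^ (p' v q), and replacing q by q' gives s^o.  As c and s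
   commute, (cs)^o = c^o s^o is the meet of all four joins.  Finally c^2 = 1 - s^2
   acts as the identity below 1 - s^o, and c^2 <= c because c^2 <= 1. *)

Section Idempotents.
Variable R : pzRingType.
Implicit Types h p x y k : R.

Lemma mulrBr1_eq0 x y : x * (1 - y) = 0 <-> x * y = x.
Proof. by rewrite mulrBr mulr1; split=> [/subr0_eq|->]; [|rewrite subrr]. Qed.

Lemma mulrBl1_eq0 x y : (1 - y) * x = 0 <-> y * x = x.
Proof. by rewrite mulrBl mul1r; split=> [/subr0_eq|->]; [|rewrite subrr]. Qed.

Lemma commr1B x y : GRing.comm x y -> GRing.comm x (1 - y).
Proof. by move=> xy; apply: commrB; [apply: commr1|]. Qed.

Lemma mulr_sandwich_eq0 p x y k : p * k = 0 -> y * k = 0 ->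
  (p * x * p + (1 - p) * y * (1 - p)) * k = 0.
Proof.
move=> pk yk; have p'k : (1 - p) * k = k by rewrite mulrBl mul1r pk subr0.
by rewrite mulrDl -!mulrA pk p'k yk !mulr0 addr0.
Qed.

Lemma sandwich_conj h p x y : GRing.comm h p ->
  h * (p * x * p + (1 - p) * y * (1 - p)) * h
  = h * p * x * (h * p) + h * (1 - p) * y * (h * (1 - p)).
Proof.
move=> hp; have hp' : GRing.comm h (1 - p) by apply: commr1B.
by rewrite mulrDr mulrDl -!(mulrA _ _ h) -hp -hp' !mulrA.
Qed.

Variables (p q : R).
Hypotheses (pp : p * p = p) (qq : q * q = q).

Lemma idem1B : (1 - p) * (1 - p) = 1 - p.
Proof. by rewrite mulrBr mulr1 mulrBl mul1r pp subrr subr0. Qed.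

Definition cos2 := p * q * p + (1 - p) * (1 - q) * (1 - p).
Definition sin2 := p * (1 - q) * p + (1 - p) * q * (1 - p).

Lemma cos2_add_sin2 : cos2 + sin2 = 1.
Proof.
rewrite /cos2 /sin2 addrACA -!mulrDl -!mulrDr subrKC subrK.
by rewrite !mulr1 pp idem1B subrKC.
Qed.

Lemma sin2E : sin2 = (p - q) ^+ 2.
Proof.
rewrite /sin2 expr2 !(mulrBl, mulrBr) !(mul1r, mulr1) pp qq.
by rewrite !opprB addrCA subrKA addrACA [RHS]addrACA (addrC q).
Qed.

Lemma cos2E : cos2 = 1 - (p - q) ^+ 2.
Proof. by rewrite -sin2E -cos2_add_sin2 addrK. Qed.

Lemma commr_sandwich x y : GRing.comm p (p * x * p + (1 - p) * y * (1 - p)).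
Proof.
have pNp : p * (1 - p) = 0 by rewrite mulrBr mulr1 pp subrr.
have Npp : (1 - p) * p = 0 by rewrite mulrBl mul1r pp subrr.
rewrite /GRing.comm mulrDr (mulrDl (p * x * p)) !mulrA pp pNp -!mulrA pp Npp.
by rewrite !mul0r !mulr0 !addr0.
Qed.

End Idempotents.

Lemma cos2C (R : pzRingType) (p q : R) : p * p = p -> q * q = q -> cos2 p q = cos2 q p.
Proof. by move=> pp qq; rewrite !cos2E // -(opprB q) sqrrN. Qed.

Section Synaptic.
Variables (F : realType) (Rg : algType F) (A pos : Rg -> Prop).
Hypothesis HA : synaptic A pos.
Local Notation le := (sle pos).
Local Notation proj := (is_proj A).
Local Notation car := (carrier A).
Implicit Types a b d u x y e f g : Rg.

Lemma A_opp a : A a -> A (- a).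
Proof. by move=> Aa; rewrite -scaleN1r; apply: (sub_Z HA). Qed.

Lemma A_sub a b : A a -> A b -> A (a - b).
Proof. by move=> Aa Ab; apply: (sub_D HA) => //; apply: A_opp. Qed.

Lemma A_sqr a : A a -> A (a * a).
Proof. by move=> Aa; apply/(pos_sub HA)/(sa2 HA). Qed.

Lemma A_half a : A (a *+ 2) -> A a.
Proof.
move=> A2a; have -> : a = (2%:R ^-1 : F) *: (a *+ 2).
  by rewrite -scaler_nat scalerA mulVf ?scale1r // pnatr_eq0.
exact: (sub_Z HA).
Qed.

Lemma A_jordan a b : A a -> A b -> A (a * b + b * a).
Proof.
move=> Aa Ab; have -> : a * b + b * a = (a + b) * (a + b) - a * a - b * b.
  rewrite mulrDl !mulrDr -(addrA (a * a)) (addrC (a * a)) addrK.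
  by rewrite addrA addrK.
by apply: A_sub; [apply: A_sub|]; apply: A_sqr => //; apply: (sub_D HA).
Qed.

Lemma A_mul_comm a b : A a -> A b -> GRing.comm a b -> A (a * b).
Proof. by move=> Aa Ab ab; apply: A_half; rewrite mulr2n {2}ab; apply: A_jordan. Qed.

Lemma A_sandwich a b : A a -> A b -> A (a * b * a).
Proof.
move=> Aa Ab; apply: A_half.
have -> : (a * b * a) *+ 2
    = (a * (a * b + b * a) + (a * b + b * a) * a) - (a * a * b + b * (a * a)).
  rewrite mulrDr mulrDl !mulrA mulr2n (addrC (a * b * a) (b * a * a)) addrACA.
  by rewrite [X in X - _]addrC addrK.
by apply: A_sub; apply: A_jordan => //; [apply: A_jordan | apply: A_sqr].
Qed.

Lemma pos1 : pos 1.
Proof. by rewrite -(mulr1 1); apply: (sa2 HA); apply: (sub_1 HA). Qed.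

Lemma sqr_eq0 x : A x -> x * x = 0 -> x = 0.
Proof. by move=> Ax; have := sa4 HA Ax pos1; rewrite !mulr1 => H /H []. Qed.

Lemma mul_eq0C a b : A a -> A b -> a * b = 0 -> b * a = 0.
Proof.
move=> Aa Ab ab0; apply: sqr_eq0.
  by have := A_jordan Aa Ab; rewrite ab0 add0r.
by rewrite mulrA -(mulrA b) ab0 mulr0 mul0r.
Qed.

Lemma pos_add_eq0 a b : pos a -> pos b -> a + b = 0 -> a = 0 /\ b = 0.
Proof.
move=> Pa Pb ab0.
have Na := addr0_eq ab0.
have a0 : a = 0 by apply: (pos_antisym HA); rewrite ?Na.
by split=> //; rewrite -Na a0 oppr0.
Qed.

Lemma le_anti x y : le x y -> le y x -> x = y.
Proof.
rewrite /sle => Pyx; rewrite -opprB => Pxy.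
by apply/esym/subr0_eq/(pos_antisym HA).
Qed.

Lemma pos_sandwich_comm x y : A x -> pos y -> GRing.comm x y -> pos (x * y * x).
Proof.
move=> Ax Py xy; have [b [Pb [[Ab CCb] bb]]] := sa5 HA Py.
have bx : GRing.comm b x by apply: CCb.
rewrite -bb mulrA -(mulrA (x * b)) bx; apply: (sa2 HA).
by apply: A_mul_comm => //; apply: commr_sym.
Qed.

Lemma pos_mul_comm x y : pos x -> pos y -> GRing.comm x y -> pos (x * y).
Proof.
move=> Px Py xy; have [b [Pb [[Ab CCb] bb]]] := sa5 HA Px.
have by_ : GRing.comm b y by apply: CCb => //; apply: (pos_sub HA).
by rewrite -bb -mulrA by_ mulrA; apply: (sa3 HA).
Qed.

Lemma proj_pos e : proj e -> pos e.
Proof. by case=> Ae ee; rewrite -ee; apply: (sa2 HA). Qed.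

Lemma proj1B e : proj e -> proj (1 - e).
Proof.
case=> Ae ee; split; first by apply: A_sub => //; apply: (sub_1 HA).
by rewrite idem1B.
Qed.

Lemma proj_mul e f : proj e -> proj f -> GRing.comm e f -> proj (e * f).
Proof.
move=> [Ae ee] [Af ff] ef; split; first exact: A_mul_comm.
by rewrite mulrA -(mulrA e) -ef mulrA ee -mulrA ff.
Qed.

Lemma proj_mul_idC e f : proj e -> proj f -> f * e = e <-> e * f = e.
Proof.
move=> [Ae _] Pf; have [A1f _] := proj1B Pf.
by rewrite -mulrBl1_eq0 -mulrBr1_eq0; split; apply: mul_eq0C.
Qed.

Lemma proj_le e f : proj e -> proj f -> le e f <-> f * e = e.
Proof.
move=> Pe Pf; have Pf' := proj1B Pf; have [A1f _] := Pf'; split=> [Pfe | fe].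
  have f'f : (1 - f) * f = 0 by apply/mulrBl1_eq0; case: Pf.
  have P1 : pos ((1 - f) * e * (1 - f)) by apply: (sa3 HA); apply: proj_pos.
  have P2 : pos (- ((1 - f) * e * (1 - f))).
    rewrite -mulNr -(sub0r ((1 - f) * e)) -f'f -mulrBr.
    exact: (sa3 HA) (proj_pos Pf') Pfe.
  have [f'e _] := sa4 HA A1f (proj_pos Pe) (pos_antisym HA P1 P2).
  exact/mulrBl1_eq0.
have ef : e * f = e by apply/proj_mul_idC.
rewrite /sle; have -> : f - e = (f - e) * (f - e).
  have [[_ ee] [_ ff]] := (Pe, Pf).
  by rewrite mulrBl !mulrBr fe ef ee ff subrr subr0.
by apply: (sa2 HA); apply: A_sub; [case: Pf | case: Pe].
Qed.

Lemma car_spec a : A a ->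
  proj (car a) /\ forall b, A b -> (a * b = 0 <-> car a * b = 0).
Proof.
move=> Aa; apply: (epsilon_spec (inhabits 0) (fun e => proj e /\
  forall b, A b -> (a * b = 0 <-> e * b = 0))).
by have [e [Pe He]] := sa6 HA Aa; exists e.
Qed.

Lemma car_proj a : A a -> proj (car a).
Proof. by case/car_spec. Qed.

Lemma car_eq0 a b : A a -> A b -> a * b = 0 <-> car a * b = 0.
Proof. by move=> /car_spec[_ H] /H. Qed.

Lemma car_idr a : A a -> a * car a = a.
Proof.
move=> Aa; have [_ ee] := car_proj Aa; have [A1e _] := proj1B (car_proj Aa).
by apply/mulrBr1_eq0/(car_eq0 Aa A1e)/mulrBr1_eq0.
Qed.

Lemma car_idl a : A a -> car a * a = a.
Proof.
move=> Aa; have [A1e _] := proj1B (car_proj Aa).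
by apply/mulrBl1_eq0/mul_eq0C => //; apply/mulrBr1_eq0/car_idr.
Qed.

Lemma car_annihilate a x : A a -> A x -> x * a = 0 -> car a * x = 0.
Proof. by move=> Aa Ax /(mul_eq0C Ax Aa) /(car_eq0 Aa Ax). Qed.

Lemma car_unique a g : A a -> proj g ->
  (forall b, A b -> (a * b = 0 <-> g * b = 0)) -> car a = g.
Proof.
move=> Aa Pg Hg; have [Pe He] := car_spec Aa.
have [A1e _] := proj1B Pe; have [A1g _] := proj1B Pg.
have ge : g * car a = g.
  by apply/mulrBr1_eq0/Hg => //; apply/mulrBr1_eq0/car_idr.
have eg : car a * g = car a.
  by apply/mulrBr1_eq0/He/Hg => //; apply/mulrBr1_eq0; case: Pg.
by rewrite -eg; apply/proj_mul_idC.
Qed.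

Lemma car_comm a d : A a -> A d -> GRing.comm a d -> GRing.comm (car a) d.
Proof.
move=> Aa Ad ad; have Pe := car_proj Aa; set e := car a in Pe *.
have [[Ae ee] [A1e _]] := (Pe, proj1B Pe).
have ee' : e * (1 - e) = 0 by apply/mulrBr1_eq0.
have e'e : (1 - e) * e = 0 by apply/mulrBl1_eq0.
have ae' : a * (1 - e) = 0 by apply/mulrBr1_eq0/car_idr.
pose b := e * d * (1 - e) + (1 - e) * d * e.
have Ab : A b.
  rewrite /b mulrBr mulr1 !mulrBl !mul1r addrACA -opprD.
  by apply: A_sub; [apply: A_jordan | apply: (sub_D HA); apply: A_sandwich].
have ab : a * b = 0.
  by rewrite /b mulrDr !mulrA car_idr // ad -(mulrA d) ae' mulr0 add0r !mul0r.
have eb : e * b = 0 by apply/(car_eq0 Aa Ab).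
have be : b * e = 0 by apply: mul_eq0C.
move: eb; rewrite /b mulrDr !mulrA ee ee' !mul0r addr0 => /mulrBr1_eq0 ede.
move: be; rewrite /b mulrDl -!mulrA e'e !mulr0 add0r ee => /mulrBl1_eq0 ded.
by rewrite /GRing.comm -ede -ded mulrA.
Qed.

Lemma car_sqr a : A a -> car (a * a) = car a.
Proof.
move=> Aa; have Aaa := A_sqr Aa; have Pe := car_proj Aa.
apply: car_unique => // b Ab; split=> [aab | /(car_eq0 Aa Ab) ab]; last first.
  by rewrite -mulrA ab mulr0.
have Pe2 := car_proj Aaa; set e2 := car (a * a) in Pe2 *.
have [A1e2 _] := proj1B Pe2.
have ae2 : GRing.comm a (1 - e2).
  apply/commr1B/commr_sym/car_comm => //.
  by apply/commr_sym/commrM; apply: commr_refl.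
have Aae2 : A (a * (1 - e2)) by apply: A_mul_comm.
have aa_e2 : a * a * (1 - e2) = 0 by apply/mulrBr1_eq0/car_idr.
have a_e2 : a * (1 - e2) = 0.
  apply: sqr_eq0 => //.
  by rewrite {1}ae2 -!mulrA (mulrA a a) aa_e2 mulr0.
have e2b : e2 * b = 0 by apply/(car_eq0 Aaa Ab).
by apply/(car_eq0 Aa Ab); move/mulrBr1_eq0: a_e2 => <-; rewrite -mulrA e2b mulr0.
Qed.

Lemma car_mul_comm x y : A x -> A y -> GRing.comm x y ->
  car (x * y) = car x * car y.
Proof.
move=> Ax Ay xy; have Axy := A_mul_comm Ax Ay xy.
have Pex := car_proj Ax; have Pey := car_proj Ay; have Pg := car_proj Axy.
have [Aex _] := Pex; have [A1g _] := proj1B Pg.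
have exy : GRing.comm (car x) y by apply: car_comm.
have eyex : GRing.comm (car y) (car x) by apply: car_comm => //; apply/commr_sym.
have gy : GRing.comm (car (x * y)) y.
  by apply: car_comm => //; rewrite /GRing.comm {1}xy mulrA.
have gex : GRing.comm (car (x * y)) (car x).
  apply: car_comm => //; apply: commr_sym; apply: commrM => //.
  by apply: car_comm => //; apply: commr_refl.
apply: car_unique => //; first by apply/proj_mul/commr_sym.
move=> b Ab; split=> [xyb | exeyb]; last first.
  have -> : x * y = x * y * (car x * car y).
    by rewrite mulrA -(mulrA x y) -exy mulrA car_idr // -mulrA car_idr.
  by rewrite -mulrA exeyb mulr0.
have gbb : (1 - car (x * y)) * b = b.
  by rewrite mulrBl mul1r ((car_eq0 Axy Ab).1 xyb) subr0.
set h := 1 - car (x * y) in A1g gbb.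
have Ayh : A (y * h) by apply/A_mul_comm/commr1B/commr_sym.
have Aexh : A (car x * h) by apply/A_mul_comm/commr1B/commr_sym.
have exyh : car x * (y * h) = 0.
  by apply/(car_eq0 Ax Ayh); rewrite mulrA; apply/mulrBr1_eq0/car_idr.
have eyexh : car y * (car x * h) = 0.
  by apply/(car_eq0 Ay Aexh); rewrite mulrA -exy -mulrA.
by rewrite -gbb mulrA -eyex -(mulrA (car y)) eyexh mul0r.
Qed.

Lemma psqrt_spec u : pos u ->
  pos (psqrt pos u) /\ CCset A u (psqrt pos u) /\ psqrt pos u * psqrt pos u = u.
Proof.
move=> Pu; have [b [Pb [CCb bb]]] := sa5 HA Pu.
have [Pd dd] : pos (psqrt pos u) /\ psqrt pos u * psqrt pos u = u.
  by apply: (epsilon_spec (inhabits 0) (fun d => pos d /\ d * d = u)); exists b.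
set d := psqrt pos u in Pd dd *; suff -> : d = b by [].
have [Ab Ad] := (pos_sub HA Pb, pos_sub HA Pd).
have bd : GRing.comm b d by apply: CCb.2 => //; rewrite /cmt -dd mulrA.
pose x := b - d; have Ax : A x by apply: A_sub.
have xb : GRing.comm x b by apply/commr_sym/commrB; [apply: commr_refl|].
have xd : GRing.comm x d by apply/commr_sym/commrB => //; apply: commr_refl.
have xbdx : x * b * x + x * d * x = 0.
  rewrite -mulrDl -mulrDr /x mulrBl !mulrDr bb dd bd.
  by rewrite (addrC (d * b) u) subrr !mul0r addr0.
have Pxbx := pos_sandwich_comm Ax Pb xb.
have Pxdx := pos_sandwich_comm Ax Pd xd.
have [/(sa4 HA Ax Pb) [_ bx] /(sa4 HA Ax Pd) [_ dx]] := pos_add_eq0 Pxbx Pxdx xbdx.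
by apply/esym/subr0_eq/sqr_eq0 => //; rewrite mulrBl bx dx subrr.
Qed.

Lemma car_add_idl a b : pos a -> pos b -> car (a + b) * a = a.
Proof.
move=> Pa Pb; have Aab : A (a + b) by apply: (sub_D HA); apply: (pos_sub HA).
have Pg' := proj1B (car_proj Aab); have [A1g _] := Pg'.
set g := car (a + b) in Pg' A1g *.
have abg : (a + b) * (1 - g) = 0 by apply/mulrBr1_eq0/car_idr.
have P1 : pos ((1 - g) * a * (1 - g)) by apply: (sa3 HA) => //; apply: proj_pos.
have P2 : pos ((1 - g) * b * (1 - g)) by apply: (sa3 HA) => //; apply: proj_pos.
have [ga _] : (1 - g) * a * (1 - g) = 0 /\ (1 - g) * b * (1 - g) = 0.
  by apply: pos_add_eq0 => //; rewrite -mulrDl -mulrDr -mulrA abg mulr0.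
by have [/mulrBl1_eq0] := sa4 HA A1g Pa ga.
Qed.

Lemma car_add_idr a b : pos a -> pos b -> car (a + b) * b = b.
Proof. by move=> Pa Pb; rewrite (addrC a); apply: car_add_idl. Qed.

Lemma pjoin_lub e f j : proj j -> le e j -> le f j ->
  (forall x, proj x -> le e x -> le f x -> le j x) -> pjoin A pos e f = j.
Proof.
move=> Pj ej fj j_least.
have lub : exists j, proj j /\ le e j /\ le f j /\
    forall x, proj x -> le e x -> le f x -> le j x by exists j.
have [Pjoin [e_join [f_join least]]] := epsilon_spec (inhabits 0) _ lub.
by apply: le_anti; [apply: least | apply: j_least].
Qed.

Lemma pmeet_glb e f m : proj m -> le m e -> le m f ->
  (forall x, proj x -> le x e -> le x f -> le x m) -> pmeet A pos e f = m.
Proof.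
move=> Pm me mf m_greatest.
have glb : exists m, proj m /\ le m e /\ le m f /\
    forall x, proj x -> le x e -> le x f -> le x m by exists m.
have [Pmeet [meet_e [meet_f greatest]]] := epsilon_spec (inhabits 0) _ glb.
by apply: le_anti; [apply: m_greatest | apply: greatest].
Qed.

Lemma join_car e f : proj e -> proj f -> pjoin A pos e f = car (e + f).
Proof.
move=> Pe Pf; have Aef : A (e + f) by apply: (sub_D HA); [case: Pe | case: Pf].
have [Pe' Pf'] := (proj_pos Pe, proj_pos Pf).
apply: pjoin_lub; first exact: car_proj.
- by apply/proj_le; [|apply: car_proj|apply: car_add_idl].
- by apply/proj_le; [|apply: car_proj|apply: car_add_idr].
move=> x Px /(proj_le Pe Px) xe /(proj_le Pf Px) xf.
apply/proj_le => //; first exact: car_proj.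
apply/proj_mul_idC => //; first exact: car_proj.
apply/mulrBr1_eq0/(car_eq0 Aef); first by case: (proj1B Px).
by rewrite mulrDl !(mulrBr1_eq0 _ _).2 ?addr0 //; apply/proj_mul_idC.
Qed.

Lemma meet_mul e f : proj e -> proj f -> GRing.comm e f -> pmeet A pos e f = e * f.
Proof.
move=> Pe Pf ef; have Pef := proj_mul Pe Pf ef.
apply: pmeet_glb => //.
- by apply/proj_le => //; rewrite mulrA; case: Pe => _ ->.
- by apply/proj_le => //; rewrite ef mulrA; case: Pf => _ ->.
move=> x Px /(proj_le Px Pe) ex /(proj_le Px Pf) fx.
by apply/proj_le => //; rewrite -mulrA fx ex.
Qed.

Lemma car_add_annl a b : pos a -> pos b -> a * (1 - car (a + b)) = 0.
Proof.
move=> Pa Pb; have Aab : A (a + b) by apply: (sub_D HA); apply: (pos_sub HA).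
have [A1g _] := proj1B (car_proj Aab).
exact/(mul_eq0C A1g (pos_sub HA Pa))/mulrBl1_eq0/car_add_idl.
Qed.

Lemma car_add_annr a b : pos a -> pos b -> b * (1 - car (a + b)) = 0.
Proof. by move=> Pa Pb; rewrite (addrC a); apply: car_add_annl. Qed.

Lemma comm_car_add1B a b f : pos a -> pos b -> proj f ->
  GRing.comm (car (a + f)) (car (b + (1 - f))).
Proof.
move=> Pa Pb Pf; have [[Af _] [A1f _]] := (Pf, proj1B Pf).
have Aaf : A (a + f) by apply: (sub_D HA) => //; apply: (pos_sub HA).
have Abf : A (b + (1 - f)) by apply: (sub_D HA) => //; apply: (pos_sub HA).
have [A1J1 _] := proj1B (car_proj Aaf); have [A1J2 _] := proj1B (car_proj Abf).
have fk1 : f * (1 - car (a + f)) = 0 by apply: car_add_annr => //; apply: proj_pos.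
have f'k2 : (1 - f) * (1 - car (b + (1 - f))) = 0.
  by apply: car_add_annr => //; apply/proj_pos/proj1B.
set J1 := car (a + f) in A1J1 fk1 *; set J2 := car (b + (1 - f)) in A1J2 f'k2 *.
have k1f : (1 - J1) * f = 0 by apply: mul_eq0C.
have fk2 : f * (1 - J2) = 1 - J2 by apply/mulrBl1_eq0.
have k2f : (1 - J2) * f = 1 - J2 by apply/mulrBr1_eq0/mul_eq0C.
have k12 : (1 - J1) * (1 - J2) = 0 by rewrite -fk2 mulrA k1f mul0r.
have k21 : (1 - J2) * (1 - J1) = 0 by rewrite -k2f -mulrA fk1 mulr0.
have k1k2 : GRing.comm (1 - J1) (1 - J2) by rewrite /GRing.comm k12 k21.
by rewrite -(subKr 1 J1) -(subKr 1 J2); apply/commr1B/commr_sym/commr1B/commr_sym.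
Qed.

Lemma pos_cos2 p q : proj p -> proj q -> pos (cos2 p q).
Proof.
move=> Pp Pq; apply: (pos_D HA); apply: (sa3 HA); apply: proj_pos => //;
  exact: proj1B.
Qed.

Section CarrierCos2.
Variables p q : Rg.
Hypotheses (Pp : proj p) (Pq : proj q).
Local Notation J1 := (car (p + (1 - q))).
Local Notation J2 := (car ((1 - p) + q)).

Lemma cos2_mul_car : cos2 p q * (J1 * J2) = cos2 p q.
Proof.
have [Pp' Pq'] := (proj_pos (proj1B Pp), proj_pos (proj1B Pq)).
have [Pp1 Pq1] := (proj_pos Pp, proj_pos Pq).
have uJ1 : cos2 p q * (1 - J1) = 0.
  by apply: mulr_sandwich_eq0; [apply: car_add_annl | apply: car_add_annr].
have uJ2 : cos2 p q * (1 - J2) = 0.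
  rewrite /cos2 addrC -{3 4}(subKr 1 p).
  by apply: mulr_sandwich_eq0; [apply: car_add_annl | apply: car_add_annr].
by rewrite mulrA ((mulrBr1_eq0 _ _).1 uJ1) ((mulrBr1_eq0 _ _).1 uJ2).
Qed.

Lemma car_mul_eq0_of_cos2 b : A b -> cos2 p q * b = 0 -> J1 * J2 * b = 0.
Proof.
move=> Ab ub; have Au := pos_sub HA (pos_cos2 Pp Pq).
have [[Ap pp] [Aq _]] := (Pp, Pq); have Pp' := proj1B Pp; have Pq' := proj1B Pq.
have [[Ap' _] [Aq' _]] := (Pp', Pq').
have Ph := proj1B (car_proj Au); set h := 1 - car (cos2 p q) in Ph.
have hb : h * b = b by rewrite mulrBl mul1r ((car_eq0 Au Ab).1 ub) subr0.
have hp : GRing.comm h p.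
  apply/commr_sym/commr1B/commr_sym/car_comm => //.
  exact/commr_sym/commr_sandwich.
have hp' : GRing.comm h (1 - p) by apply: commr1B.
have [Php Php'] := (proj_mul Ph Pp hp, proj_mul Ph Pp' hp').
have [[Ahp _] [Ahp' _]] := (Php, Php').
have [hpqhp hp'q'hp'] :
    h * p * q * (h * p) = 0 /\ h * (1 - p) * (1 - q) * (h * (1 - p)) = 0.
  apply: pos_add_eq0; try by apply: (sa3 HA); apply: proj_pos.
  by rewrite -sandwich_conj // -mulrA ((mulrBr1_eq0 _ _).2 (car_idr Au)) mulr0.
have [hpq _] := sa4 HA Ahp (proj_pos Pq) hpqhp.
have [hp'q' _] := sa4 HA Ahp' (proj_pos Pq') hp'q'hp'.
have J2hp : J2 * (h * p) = 0.
  apply: car_annihilate => //; first by apply: (sub_D HA).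
  by rewrite mulrDr hpq addr0 -mulrA ((mulrBr1_eq0 _ _).2 pp) mulr0.
have J1hp' : J1 * (h * (1 - p)) = 0.
  apply: car_annihilate => //; first by apply: (sub_D HA).
  by rewrite mulrDr hp'q' addr0 -mulrA ((mulrBl1_eq0 _ _).2 pp) mulr0.
have J2hp' : J2 * (h * (1 - p)) = h * (1 - p).
  apply/mulrBl1_eq0; rewrite hp' mulrA.
  have [A1J2 _] := proj1B (car_proj (sub_D HA Ap' Aq)).
  by rewrite (mul_eq0C Ap' A1J2) ?mul0r //; apply: car_add_annl; apply: proj_pos.
have hE : h = h * p + h * (1 - p) by rewrite -mulrDr subrKC mulr1.
have J1J2h : J1 * J2 * h = 0.
  by rewrite hE mulrDr -!mulrA J2hp mulr0 add0r J2hp' J1hp'.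
by rewrite -hb mulrA J1J2h mul0r.
Qed.

Lemma comm_car_cos2 : GRing.comm J1 J2.
Proof.
by apply/commr_sym/comm_car_add1B => //; apply: proj_pos => //; apply: proj1B.
Qed.

Lemma car_cos2 : car (cos2 p q) = J1 * J2.
Proof.
have Au := pos_sub HA (pos_cos2 Pp Pq).
have [[Ap _] [Aq _]] := (Pp, Pq); have [[Ap' _] [Aq' _]] := (proj1B Pp, proj1B Pq).
apply: car_unique => //.
  by apply: proj_mul comm_car_cos2; apply: car_proj; apply: (sub_D HA).
move=> b Ab; split; first exact: car_mul_eq0_of_cos2.
by move=> J12b; rewrite -cos2_mul_car -mulrA J12b mulr0.
Qed.

End CarrierCos2.

Lemma comm_psqrt u d : pos u -> A d -> GRing.comm u d ->
  GRing.comm (psqrt pos u) d.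
Proof. by move=> Pu Ad ud; have [_ [[_ CCu] _]] := psqrt_spec Pu; apply: CCu. Qed.

Lemma le1_of_sqr_le1 x : pos x -> le (x * x) 1 -> le x 1.
Proof.
move=> Px Px2; have Ax := pos_sub HA Px.
have [w [Aw [xw wx]]] : exists w, A w /\ (1 + x) * w = 1 /\ w * (1 + x) = 1.
  by apply: (sa7 HA); rewrite /sle addrC addKr.
have wx_comm : GRing.comm w x.
  have : w * (1 + x) = (1 + x) * w by rewrite wx xw.
  by rewrite mulrDr mulrDl mulr1 mul1r => /addrI.
have Pw : pos w.
  have -> : w = w * w + w * x * w.
    by rewrite -{1}(mulr1 w) -xw mulrA mulrDr mulr1 mulrDl.
  by apply: (pos_D HA); [apply: (sa2 HA) | apply: pos_sandwich_comm].
rewrite /sle; have -> : 1 - x = w * (1 - x * x).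
  have -> : 1 - x * x = (1 + x) * (1 - x).
    by rewrite mulrDl mul1r mulrBr mulr1 subrKA.
  by rewrite mulrA wx mul1r.
apply: pos_mul_comm => //.
by apply: commrB; [apply: commr1 | apply: commrM].
Qed.

Lemma sqr_le_of_le1 x : pos x -> le x 1 -> le (x * x) x.
Proof.
move=> Px Px1; rewrite /sle -{1}(mulr1 x) -mulrBr.
by apply: pos_mul_comm => //; apply/commr1B/commr_refl.
Qed.

Section Pythagorean.
Variables x y : Rg.
Hypotheses (Px : pos x) (Py : pos y) (xy : GRing.comm x y) (xxyy : x * x + y * y = 1).

Lemma sqrE : x * x = 1 - y * y.
Proof. by rewrite -xxyy addrK. Qed.

Lemma sqr_mul_car1B : x * x * (1 - car y) = 1 - car y.
Proof.
have Ay := pos_sub HA Py.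
have yyk : y * y * (1 - car y) = 0.
  by rewrite -mulrA ((mulrBr1_eq0 _ _).2 (car_idr Ay)) mulr0.
by rewrite sqrE mulrBl mul1r yyk subr0.
Qed.

Lemma car1B_mul_sqr : (1 - car y) * (x * x) = 1 - car y.
Proof.
have Ay := pos_sub HA Py.
have kyy : (1 - car y) * (y * y) = 0.
  by rewrite mulrA ((mulrBl1_eq0 _ _).2 (car_idl Ay)) mul0r.
by rewrite sqrE mulrBr mulr1 kyy subr0.
Qed.

Lemma car1B_le_sqr : le (1 - car y) (x * x).
Proof.
have eyx : GRing.comm (car y) x.
  by apply: car_comm; [apply: (pos_sub HA) .. | apply: commr_sym].
rewrite /sle -sqr_mul_car1B mulrBr mulr1 subKr -mulrA -eyx mulrA.
by apply: (sa3 HA) => //; apply/proj_pos/car_proj/(pos_sub HA).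
Qed.

Lemma sqr_le_self : le (x * x) x.
Proof.
apply: sqr_le_of_le1 (le1_of_sqr_le1 Px _) => //.
by rewrite /sle sqrE subKr; apply/(sa2 HA)/(pos_sub HA).
Qed.

End Pythagorean.

Section PairOfProjections.
Variables p q : Rg.
Hypotheses (Pp : proj p) (Pq : proj q).
Local Notation c := (psqrt pos (cos2 p q)).
Local Notation s := (psqrt pos (sin2 p q)).

Lemma sin2_cos2 : sin2 p q = cos2 p (1 - q).
Proof. by rewrite /cos2 subKr. Qed.

Lemma pos_sin2 : pos (sin2 p q).
Proof. by rewrite sin2_cos2; apply/pos_cos2/proj1B. Qed.

Lemma cos_sin_sqr : c * c = cos2 p q /\ s * s = sin2 p q /\ c * c + s * s = 1.
Proof.
have [_ [_ ->]] := psqrt_spec (pos_cos2 Pp Pq).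
have [_ [_ ->]] := psqrt_spec pos_sin2.
by split=> //; split=> //; apply: cos2_add_sin2; case: Pp.
Qed.

Lemma pos_cos_sin : pos c /\ pos s.
Proof. by have [[? _] [? _]] := (psqrt_spec (pos_cos2 Pp Pq), psqrt_spec pos_sin2). Qed.

Lemma cos_sin_comm :
  [/\ GRing.comm c p, GRing.comm c q, GRing.comm s p, GRing.comm s q & GRing.comm c s].
Proof.
have [[Ap pp] [Aq qq]] := (Pp, Pq).
have [Pc Ps] := (pos_cos2 Pp Pq, pos_sin2).
have As : A s by have [/(pos_sub HA)] := psqrt_spec Ps.
have [cc [_ cs1]] := cos_sin_sqr.
have up : GRing.comm (cos2 p q) p by apply/commr_sym/commr_sandwich.
have uq : GRing.comm (cos2 p q) q by rewrite cos2C //; apply/commr_sym/commr_sandwich.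
have cos2E : cos2 p q = 1 - s * s by rewrite -cs1 addrK cc.
have sinE : sin2 p q = 1 - cos2 p q by rewrite -(cos2_add_sin2 q pp) addrC addKr.
split; try by apply: comm_psqrt => //; rewrite ?sinE; apply/commr_sym/commr1B/commr_sym.
apply: comm_psqrt => //; rewrite cos2E.
by apply/commr_sym/commr1B; apply: commrM; apply: commr_refl.
Qed.

Local Notation Jpq := (car (p + q)).
Local Notation Jpq' := (car (p + (1 - q))).
Local Notation Jp'q := (car ((1 - p) + q)).
Local Notation Jp'q' := (car ((1 - p) + (1 - q))).

Lemma car_cos : car c = Jpq' * Jp'q.
Proof.
have [cc _] := cos_sin_sqr; have [/(pos_sub HA) Ac _] := pos_cos_sin.
by rewrite -car_sqr // cc car_cos2.
Qed.

Lemma car_sin : car s = Jpq * Jp'q'.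
Proof.
have [_ [ss _]] := cos_sin_sqr; have [_ /(pos_sub HA) As] := pos_cos_sin.
by rewrite -car_sqr // ss sin2_cos2 car_cos2 ?subKr //; apply: proj1B.
Qed.

Lemma comm_joins : [/\ GRing.comm Jpq Jpq', GRing.comm Jpq Jp'q, GRing.comm Jpq Jp'q',
  GRing.comm Jpq' Jp'q' & GRing.comm Jp'q Jp'q'].
Proof.
have [Pp1 Pq1] := (proj_pos Pp, proj_pos Pq).
have [Pp' Pq'] := (proj_pos (proj1B Pp), proj_pos (proj1B Pq)).
split; try by apply: comm_car_add1B.
- by rewrite (addrC p) (addrC (1 - p)); apply: comm_car_add1B.
- by rewrite (addrC p) (addrC (1 - p)); apply: comm_car_add1B => //; apply: proj1B.
Qed.

Lemma pcommE : pcomm A pos p q = Jpq * Jpq' * Jp'q * Jp'q'.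
Proof.
have [[Ap _] [Aq _]] := (Pp, Pq); have [[Ap' _] [Aq' _]] := (proj1B Pp, proj1B Pq).
have Pa : proj Jpq by apply/car_proj/(sub_D HA).
have Pb : proj Jpq' by apply/car_proj/(sub_D HA).
have Pc : proj Jp'q by apply/car_proj/(sub_D HA).
have Pd : proj Jp'q' by apply/car_proj/(sub_D HA).
have [ab ac ad bd cd] := comm_joins; have bc := comm_car_cos2 Pp Pq.
have abc : GRing.comm (Jpq * Jpq') Jp'q by apply/commr_sym/commrM; apply/commr_sym.
have abcd : GRing.comm (Jpq * Jpq' * Jp'q) Jp'q'.
  by apply/commr_sym/commrM; [apply/commrM|]; apply/commr_sym.
have Pab := proj_mul Pa Pb ab; have Pabc := proj_mul Pab Pc abc.
rewrite /pcomm /porth !join_car //; try exact: proj1B.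
by rewrite (meet_mul Pa Pb ab) (meet_mul Pab Pc abc) (meet_mul Pabc Pd abcd).
Qed.

Lemma car_cos_mul_car_sin : car c * car s = pcomm A pos p q.
Proof.
have [ab ac _ _ _] := comm_joins.
rewrite pcommE car_cos car_sin !mulrA -(mulrA Jpq') -ac (mulrA Jpq') -ab.
by rewrite -(mulrA (Jpq * Jpq')).
Qed.

Lemma car_cos_sin_comm :
  cmt (car c) p /\ cmt (car c) q /\ cmt (car c) s /\ cmt (car c) (pcomm A pos p q) /\
  cmt (car s) p /\ cmt (car s) q /\ cmt (car s) (pcomm A pos p q) /\ cmt (car s) c /\
  cmt (car c) (car s).
Proof.
have [[Ap _] [Aq _]] := (Pp, Pq).
have [/(pos_sub HA) Ac /(pos_sub HA) As] := pos_cos_sin.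
have [cp cq sp sq cs] := cos_sin_comm.
have [[Aec _] [Aes _]] := (car_proj Ac, car_proj As).
have esc : GRing.comm (car s) c by apply/car_comm/commr_sym.
have eces : GRing.comm (car c) (car s) by apply/car_comm/commr_sym.
rewrite -car_cos_mul_car_sin.
do ![split]; try by apply: car_comm.
- by apply: commrM => //; apply: commr_refl.
- by apply: commrM; [apply: commr_sym | apply: commr_refl].
Qed.

Lemma car_cos_sin_meet :
  car c = pmeet A pos (pjoin A pos p (porth q)) (pjoin A pos (porth p) q) /\
  car s = pmeet A pos (pjoin A pos p q) (pjoin A pos (porth p) (porth q)).
Proof.
have [[Ap _] [Aq _]] := (Pp, Pq); have [Pp' Pq'] := (proj1B Pp, proj1B Pq).
have [[Ap' _] [Aq' _]] := (Pp', Pq').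
have [_ _ ad _ _] := comm_joins; have bc := comm_car_cos2 Pp Pq.
rewrite /porth !join_car // car_cos car_sin.
by split; apply/esym/meet_mul => //; apply/car_proj/(sub_D HA).
Qed.

Lemma car_cos_mul_sin :
  car (c * s) = car c * car s /\ car c * car s = pmeet A pos (car c) (car s) /\
  pmeet A pos (car c) (car s) = pcomm A pos p q.
Proof.
have [/(pos_sub HA) Ac /(pos_sub HA) As] := pos_cos_sin.
have [_ _ _ _ cs] := cos_sin_comm.
have [_ [_ [_ [_ [_ [_ [_ [_ eces]]]]]]]] := car_cos_sin_comm.
have emeet : car c * car s = pmeet A pos (car c) (car s).
  by apply/esym/meet_mul => //; apply: car_proj.
by split; [apply: car_mul_comm | split; rewrite -?emeet ?car_cos_mul_car_sin].
Qed.

Lemma cos_sqr_car_sin :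
  c ^+ 2 * porth (car s) = porth (car s) /\ porth (car s) * c ^+ 2 = porth (car s) /\
  le (porth (car s)) (c ^+ 2) /\ le (c ^+ 2) c.
Proof.
have [Pc Ps] := pos_cos_sin; have [_ _ _ _ cs] := cos_sin_comm.
have [_ [_ cs1]] := cos_sin_sqr.
rewrite expr2 /porth; split; first exact: sqr_mul_car1B Ps cs1.
split; first exact: car1B_mul_sqr Ps cs1.
by split; [apply: car1B_le_sqr Pc Ps cs cs1 | apply: sqr_le_self Pc Ps cs1].
Qed.

Lemma sin_sqr_car_cos :
  s ^+ 2 * porth (car c) = porth (car c) /\ porth (car c) * s ^+ 2 = porth (car c) /\
  le (porth (car c)) (s ^+ 2) /\ le (s ^+ 2) s.
Proof.
have [Pc Ps] := pos_cos_sin; have [_ _ _ _ /commr_sym sc] := cos_sin_comm.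
have [_ [_ cs1]] := cos_sin_sqr; rewrite addrC in cs1.
rewrite expr2 /porth; split; first exact: sqr_mul_car1B Pc cs1.
split; first exact: car1B_mul_sqr Pc cs1.
by split; [apply: car1B_le_sqr Ps Pc sc cs1 | apply: sqr_le_self Ps Pc cs1].
Qed.

End PairOfProjections.

End Synaptic.

Theorem theorem4p4 (F : realType) (Rg : algType F) (A pos : Rg -> Prop)
  (HA : synaptic A pos) (p q : Rg) (hp : is_proj A p) (hq : is_proj A q) :
  let meet := pmeet A pos in
  let join := pjoin A pos in
  let car := carrier A in
  let le := sle pos in
  let r := pcomm A pos p q in
  let c := psqrt pos (p * q * p + porth p * porth q * porth p) in
  let s := psqrt pos (p * porth q * p + porth p * q * porth p) in
  (* (i) *)
  (cmt (car c) p /\ cmt (car c) q /\ cmt (car c) s /\ cmt (car c) r /\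
   cmt (car s) p /\ cmt (car s) q /\ cmt (car s) r /\ cmt (car s) c /\
   cmt (car c) (car s)) /\
  (* (ii) *)
  (car c = meet (join p (porth q)) (join (porth p) q) /\
   car s = meet (join p q) (join (porth p) (porth q))) /\
  (* (iii) *)
  (car (c * s) = car c * car s /\
   car c * car s = meet (car c) (car s) /\
   meet (car c) (car s) =
     meet (meet (meet (join p q) (join p (porth q))) (join (porth p) q))
          (join (porth p) (porth q)) /\
   meet (meet (meet (join p q) (join p (porth q))) (join (porth p) q))
          (join (porth p) (porth q)) = r) /\
  (* (iv) *)
  (c ^+ 2 * porth (car s) = porth (car s) /\
   porth (car s) * c ^+ 2 = porth (car s) /\
   le (porth (car s)) (c ^+ 2) /\ le (c ^+ 2) c) /\
  (* (v) *)
  (s ^+ 2 * porth (car c) = porth (car c) /\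
   porth (car c) * s ^+ 2 = porth (car c) /\
   le (porth (car c)) (s ^+ 2) /\ le (s ^+ 2) s).
Proof.
move=> meet join car le r c s.
have [cs_car [cs_meet meet_r]] := car_cos_mul_sin HA hp hq.
split; first exact: car_cos_sin_comm.
split; first exact: car_cos_sin_meet.
split; first by do !split.
by split; [apply: cos_sqr_car_sin | apply: sin_sqr_car_cos].
Qed.
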